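(* Let $k,n,m$ be positive integers with $n+m\le k$ and $q$ a prime power. Let $\mathbb{T}$ be the set of $1$-dimensional subspaces of $\mathbb{F}_q^k$ and let $\mathbb{X}=\{\{T_1,\dots,T_n\}\subseteq\mathbb{T}:\dim(T_1+\cdots+T_n)=n\}$, $\mathbb{Y}=\{\{T_1,\dots,T_m\}\subseteq\mathbb{T}:\dim(T_1+\cdots+T_m)=m\}$, $\mathbb{Z}=\{\{T_1,\dots,T_{n+m}\}\subseteq\mathbb{T}:\dim(T_1+\cdots+T_{n+m})=n+m\}$. Let $B$ be the bipartite graph with left vertex set $\mathbb{X}$, right vertex set $\mathbb{Y}$, and $X$ adjacent to $Y$ iff $X\cup Y\in\mathbb{Z}$. For $Z\in\mathbb{Z}$, the set $\mathcal{C}_Z=\{\{X,Z\setminus X\}: X\subseteq Z,\ |X|=n\}$ is a subset of $E(B)$ and is an induced matching of $B$ of size $\binom{n+m}{m}$.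
   Context: An induced matching of a bipartite graph $B$ is a set $\mathcal{C}\subseteq E(B)$ such that for any two distinct $\{k_1,f_1\},\{k_2,f_2\}\in\mathcal{C}$: $k_1\ne k_2$, $f_1\ne f_2$, and $\{k_1,f_2\},\{k_2,f_1\}\notin E(B)$. *)

From mathcomp Require Import all_boot all_order all_algebra all_field.
Set Implicit Arguments. Unset Strict Implicit. Unset Printing Implicit Defensive.
Import GRing.Theory.
Local Open Scope ring_scope.

(* Subspaces of F^k are represented canonically by square k x k matrices A
   with <<A>>%MS == A (row space; canonical representative). *)

Definition lines (F : finFieldType) (k : nat) : {set 'M[F]_k} :=
  [set A : 'M[F]_k | (<<A>>%MS == A) && (\rank A == 1%N)].

Definition indep_lines (F : finFieldType) (k r : nat) : {set {set 'M[F]_k}} :=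
  [set X : {set 'M[F]_k} | [&& X \subset lines F k, #|X| == r
                             & \rank (\sum_(T in X) T)%MS == r]].

Definition Bedges (F : finFieldType) (k n m : nat)
  : {set {set 'M[F]_k} * {set 'M[F]_k}} :=
  [set XY | [&& XY.1 \in indep_lines F k n, XY.2 \in indep_lines F k m
              & XY.1 :|: XY.2 \in indep_lines F k (n + m)]].

Definition induced_matching (L R : finType) (E C : {set L * R}) : Prop :=
  C \subset E /\
  forall e1 e2, e1 \in C -> e2 \in C -> e1 != e2 ->
    [/\ e1.1 != e2.1, e1.2 != e2.2, (e1.1, e2.2) \notin E
      & (e2.1, e1.2) \notin E].

Definition CZ (F : finFieldType) (k n : nat) (Z : {set 'M[F]_k})
  : {set {set 'M[F]_k} * {set 'M[F]_k}} :=
  [set (X, Z :\: X) | X in [set X in powerset Z | #|X| == n]].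

From mathcomp Require Import all_boot all_order all_algebra all_field.

Set Implicit Arguments.
Unset Strict Implicit.

(** Since the rank of a sum of lines is at most the number of lines, any
    subset of an independent set of lines is again independent; hence for an
    [n]-subset [X] of [Z] both [X] and [Z :\: X] are vertices of [B] and
    their union [Z] makes them adjacent.  For two distinct [n]-subsets [X1],
    [X2] of [Z], the set [X1] meets [Z :\: X2], so [X1 :|: Z :\: X2] has fewer
    than [n + m] elements and [X1], [Z :\: X2] are not adjacent. *)

Section SubsetsOfASet.
Variable T : finType.
Implicit Types A B X Z : {set T}.

Lemma setUDS X Z : X \subset Z -> X :|: Z :\: X = Z.
Proof. by move=> sXZ; rewrite -{2}(setID Z X) (setIidPr sXZ). Qed.

Lemma setDDS X Z : X \subset Z -> Z :\: (Z :\: X) = X.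
Proof. by move=> sXZ; rewrite setDDr setDv set0U (setIidPr sXZ). Qed.

Lemma cardsUD_lt A B Z : A \subset Z -> B \subset Z -> #|A| = #|B| -> A != B ->
  #|A :|: Z :\: B| < #|Z|.
Proof.
move=> sAZ sBZ cAB neAB.
have meet : A :&: (Z :\: B) != set0.
  rewrite setIDA (setIidPl sAZ) setD_eq0.
  by apply: contra neAB => sAB; rewrite eqEcard sAB cAB /=.
have cardsZ : #|B| + #|Z :\: B| = #|Z|.
  by rewrite -(cardsID B Z) (setIidPr sBZ).
by rewrite -cardsZ -cAB -cardsUI -[X in X < _]addn0 ltn_add2l card_gt0.
Qed.

End SubsetsOfASet.

Section IndependentLines.
Variables (F : finFieldType) (k : nat).
Implicit Types X Z : {set 'M[F]_k}.

Lemma mxrank_sum_lines X : X \subset lines F k -> \rank (\sum_(T in X) T)%MS <= #|X|.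
Proof.
move=> sX; rewrite -sum1_card.
elim/big_ind2: _ => [|A a B b rAa rBb|T TX]; first by rewrite mxrank0.
- exact: leq_trans (mxrank_adds_leqif A B) (leq_add rAa rBb).
- by move: (subsetP sX T TX); rewrite inE => /andP[_ /eqP ->].
Qed.

Lemma indep_linesS X Z r :
  Z \in indep_lines F k r -> X \subset Z -> X \in indep_lines F k #|X|.
Proof.
rewrite !inE => /and3P[sZ /eqP cZ /eqP rZ] sXZ.
have sX := subset_trans sXZ sZ.
rewrite sX eqxx eqn_leq mxrank_sum_lines //=.
have rZle := mxrank_adds_leqif (\sum_(T in (Z :&: X)%SET) T)%MS
  (\sum_(T in (Z :\: X)%SET) T)%MS.
rewrite -big_setID rZ -cZ -(cardsID X Z) (setIidPr sXZ) in rZle.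
have rDle := mxrank_sum_lines (subset_trans (subsetDl Z X) sZ).
by rewrite -(leq_add2r #|Z :\: X|) (leq_trans rZle) ?leq_add2l.
Qed.

Lemma card_indep_lines X r : X \in indep_lines F k r -> #|X| = r.
Proof. by rewrite inE => /and3P[_ /eqP]. Qed.

Lemma Bedges_cardsU n m X Y : (X, Y) \in Bedges F k n m -> #|X :|: Y| = n + m.
Proof. by rewrite inE => /and3P[_ _ /card_indep_lines]. Qed.

End IndependentLines.

Section InducedMatching.
Variables (F : finFieldType) (k n m : nat) (Z : {set 'M[F]_k}).

Lemma CZP (e : {set 'M[F]_k} * {set 'M[F]_k}) :
  reflect (exists2 X : {set 'M[F]_k}, (X \subset Z) && (#|X| == n) & e = (X, Z :\: X))
          (e \in CZ n Z).
Proof.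
apply: (iffP imsetP) => -[X XZ ->]; exists X => //; first by rewrite !inE in XZ.
by rewrite !inE.
Qed.

Lemma card_CZ : #|CZ n Z| = 'C(#|Z|, n).
Proof.
have inj_split : injective (fun X : {set 'M[F]_k} => (X, Z :\: X)) by move=> A B [].
rewrite (card_imset _ inj_split) -cards_draws.
by apply: eq_card => X; rewrite !inE.
Qed.

Hypothesis indepZ : Z \in indep_lines F k (n + m).

Lemma CZ_sub_Bedges : CZ n Z \subset Bedges F k n m.
Proof.
apply/subsetP => _ /CZP[X /andP[sXZ /eqP cX] ->].
have cD : #|Z :\: X| = m by rewrite cardsDS // (card_indep_lines indepZ) cX addKn.
rewrite inE /= setUDS //.
by rewrite -{1}cX -{1}cD !(indep_linesS indepZ) ?subsetDl.
Qed.

Lemma crossed_notin_Bedges (A B : {set 'M[F]_k}) :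
  A \subset Z -> B \subset Z -> #|A| = #|B| -> A != B ->
  (A, Z :\: B) \notin Bedges F k n m.
Proof.
move=> sA sB cAB neAB; apply/negP => /Bedges_cardsU cU.
by move: (cardsUD_lt sA sB cAB neAB); rewrite cU (card_indep_lines indepZ) ltnn.
Qed.

Lemma CZ_induced_matching : induced_matching (Bedges F k n m) (CZ n Z).
Proof.
split; first exact: CZ_sub_Bedges.
move=> _ _ /CZP[X1 /andP[s1 /eqP c1] ->] /CZP[X2 /andP[s2 /eqP c2] ->] ne /=.
have neX : X1 != X2 by apply: contraNneq ne => ->.
have c12 : #|X1| = #|X2| by rewrite c1 c2.
split=> //.
- by apply: contraNneq neX => eqD; rewrite -(setDDS s1) -(setDDS s2) eqD.
- exact: crossed_notin_Bedges.
- by apply: crossed_notin_Bedges; rewrite // eq_sym.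
Qed.

End InducedMatching.

Theorem lemma10 (F : finFieldType) (k n m : nat)
  (hk : 0 < k) (hn : 0 < n) (hm : 0 < m) (hnmk : n + m <= k)
  (Z : {set 'M[F]_k}) (hZ : Z \in indep_lines F k (n + m)) :
  CZ n Z \subset Bedges F k n m /\
  induced_matching (Bedges F k n m) (CZ n Z) /\
  #|CZ n Z| = 'C(n + m, m).
Proof.
split; first exact: CZ_sub_Bedges hZ.
split; first exact: CZ_induced_matching hZ.
by rewrite card_CZ (card_indep_lines hZ) -bin_sub ?leq_addr // addKn.
Qed.
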